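(* Let $f:\mathbb{R}^n\to(-\infty,+\infty]$ be proper, lower semicontinuous and prox-bounded with threshold $\lambda_f>0$. Then (i) $\operatorname{dom}\partial_p^\lambda f\ne\varnothing$ for every $0<\lambda<\lambda_f$; (ii) $\lambda_f=\sup\{\lambda>0:\operatorname{dom}\partial_p^\lambda f\ne\varnothing\}$.
   Context: Prox-bounded with threshold $\lambda_f=\sup\{\lambda>0:\inf_y\{f(y)+\frac1{2\lambda}\|y-x\|^2\}>-\infty\text{ for some }x\}$. $v\in\partial_p^\lambda f(x)$ iff $x\in\operatorname{dom}f$ and $f(y)\ge f(x)+\langle v,y-x\rangle-\frac1{2\lambda}\|y-x\|^2$ for all $y$; $\operatorname{dom}\partial_p^\lambda f=\{x:\partial_p^\lambda f(x)\ne\varnothing\}$. *)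

From HB Require Import structures.
From mathcomp Require Import all_boot all_order all_algebra.
From mathcomp Require Import all_classical all_reals all_analysis.
Set Implicit Arguments. Unset Strict Implicit. Unset Printing Implicit Defensive.
Import Order.TTheory GRing.Theory Num.Theory.
Import numFieldNormedType.Exports.
Local Open Scope ring_scope.
Local Open Scope classical_set_scope.

(* R^n is modelled as row vectors 'rV[R]_n over a realType R, with the
   (product) topology of MathComp-Analysis; the Euclidean inner product and
   squared norm are written explicitly. *)

Definition dotv (R : realType) (n : nat) (u v : 'rV[R]_n) : R :=
  \sum_(i < n) u ord0 i * v ord0 i.

Definition sqnorm (R : realType) (n : nat) (u : 'rV[R]_n) : R := dotv u u.

Definition proper_fun (R : realType) (n : nat) (f : 'rV[R]_n -> \bar R) : Prop :=
  (forall x, (-oo < f x)%E) /\ exists x, (f x < +oo)%E.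

Definition prox_bounded_params (R : realType) (n : nat) (f : 'rV[R]_n -> \bar R)
  : set R :=
  [set lam | 0 < lam /\ exists x : 'rV[R]_n,
     (-oo < ereal_inf [set (f y + ((2 * lam)^-1 * sqnorm (y - x))%:E)%E | y in setT])%E].

Definition prox_bounded (R : realType) (n : nat) (f : 'rV[R]_n -> \bar R) : Prop :=
  prox_bounded_params f !=set0.

Definition prox_threshold (R : realType) (n : nat) (f : 'rV[R]_n -> \bar R) : \bar R :=
  ereal_sup [set lam%:E | lam in prox_bounded_params f].

Definition dom (R : realType) (n : nat) (f : 'rV[R]_n -> \bar R) : set 'rV[R]_n :=
  [set x | (f x < +oo)%E].

Definition prox_subgrad (R : realType) (n : nat) (lam : R) (f : 'rV[R]_n -> \bar R)
  (x v : 'rV[R]_n) : Prop :=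
  dom f x /\ forall y : 'rV[R]_n,
    (f x + (dotv v (y - x) - (2 * lam)^-1 * sqnorm (y - x))%:E <= f y)%E.

Definition dom_prox_subdiff (R : realType) (n : nat) (lam : R)
  (f : 'rV[R]_n -> \bar R) : set 'rV[R]_n :=
  [set x | exists v, prox_subgrad lam f x v].

From HB Require Import structures.
From mathcomp Require Import all_boot all_order all_algebra.
From mathcomp Require Import all_classical all_reals all_analysis.
From mathcomp Require Import ring lra.
Import Order.TTheory GRing.Theory Num.Theory.
Import numFieldNormedType.Exports.
Local Open Scope ring_scope.
Local Open Scope classical_set_scope.

(* If mu is a prox-boundedness parameter at x0 and lam < mu, then
   g = f + |. - x0|^2/(2 lam) exceeds the bounded-below function
   f + |. - x0|^2/(2 mu) by a positive multiple of |. - x0|^2, so the lower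
   semicontinuous g is coercive and attains its minimum at some p.  Expanding
   the square, "p minimises f + |. - z|^2/(2 lam)" is exactly the statement
   (z - p)/lam \in \partial_p^lam f(p); read backwards, a proximal
   subgradient v at x makes lam a prox-boundedness parameter at x + lam v.
   So {lam > 0 | dom \partial_p^lam f <> empty} contains (0, lambda_f) and
   lies inside the set of prox-boundedness parameters, which gives (ii). *)

Lemma lte_EFin_between {R : realType} {x y : \bar R} : (x < y)%E ->
  exists2 r : R, (x < r%:E)%E & (r%:E < y)%E.
Proof.
case: x => [a| |]; case: y => [b| |] //=; rewrite ?lte_fin => xy.
- by have [] := midf_lt xy; exists ((a + b) / 2).
- by exists (a + 1); rewrite ?lte_fin ?ltey // ltrDl.
- by exists (b - 1); rewrite ?lte_fin ?ltNye // gtrDl ltrN10.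
- by exists 0; rewrite ?ltNye ?ltey.
Qed.

Section lower_semicontinuous_minimum.
Context {R : realType} {T : topologicalType}.
Implicit Types (g : T -> \bar R) (A : set T).

Lemma lsc_compact_min g A : A !=set0 -> compact A -> lower_semicontinuous g ->
  exists2 c, A c & forall t, A t -> (g c <= g t)%E.
Proof.
move=> [a Aa] cA lsc_g; pose m := ereal_inf (g @` A).
have m_le t : A t -> (m <= g t)%E by move=> At; apply: ereal_inf_lbound; exists t.
have [m_inf|m_fin] := eqVneq m +oo%E.
  exists a => // t At; have := m_le t At.
  rewrite m_inf leye_eq => /eqP ->; exact: leey.
(* The traces on A of the strict sublevel sets above m form a proper filter;
   by lower semicontinuity, its cluster points in A are minimisers. *)
pose D := [set b : R | (m < b%:E)%E].
pose B b := [set y | A y /\ (g y < b%:E)%E].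
have [b0 Db0] : D !=set0.
  have : (m < +oo)%E by rewrite ltey.
  by move=> /lte_EFin_between[b mb _]; exists b.
have F_proper : ProperFilter (filter_from D B).
  apply: filter_from_proper; last first.
    by move=> b /ereal_inf_lt[_ [y Ay <-] gyb]; exists y.
  apply: filter_from_filter; first by exists b0.
  move=> b1 b2 Db1 Db2; exists (Order.min b1 b2).
    by rewrite /D /= EFin_min lt_min Db1.
  by move=> y [Ay]; rewrite EFin_min lt_min => /andP[gb1 gb2].
have F_A : filter_from D B A by exists b0 => // y [].
have [x [Ax x_cluster]] := cA _ F_proper F_A.
exists x => // t At; apply: le_trans (m_le t At); rewrite leNgt; apply/negP => mgx.
have [b mb bgx] := lte_EFin_between mgx.
have [V nV Vgt] := lsc_g x b bgx.
have [y [[_ gyb] Vy]] := x_cluster (B b) V (ex_intro2 _ _ b mb (@subset_refl _ _)) nV.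
by have := lt_trans gyb (Vgt y Vy); rewrite ltxx.
Qed.

Lemma lsc_min_of_compact_core g A a : compact A -> lower_semicontinuous g ->
  A a -> (forall y, ~ A y -> (g a <= g y)%E) -> exists p, forall y, (g p <= g y)%E.
Proof.
move=> cA lsc_g Aa a_le.
have [p Ap p_min] := @lsc_compact_min g A (ex_intro _ a Aa) cA lsc_g.
exists p => y; have [Ay|nAy] := pselect (A y); first exact: p_min.
exact: le_trans (p_min a Aa) (a_le y nAy).
Qed.

Lemma lscD_continuous (f : T -> \bar R) (q : T -> R) :
  lower_semicontinuous f -> continuous q ->
  lower_semicontinuous (fun y => (f y + (q y)%:E)%E).
Proof.
move=> lsc_f cq x a; rewrite -lteBlDr // -EFinB => /lte_EFin_between[c ac cfx].
have [V1 nV1 V1_gt] := lsc_f x c cfx.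
have e_gt0 : 0 < c - (a - q x) by rewrite subr_gt0 -lte_fin.
exists (V1 `&` [set y | `|q x - q y| < c - (a - q x)]).
  by apply: filterI; [exact: nV1 | exact: cvgr_dist_lt (cq x) _ e_gt0].
move=> y [/V1_gt cfy /= qy]; rewrite -[a](subrK c) EFinD addeC.
apply: lteD => //; rewrite lte_fin; have := ler_norm (q x - q y); lra.
Qed.

Lemma continuous_sum (I : Type) (s : seq I) (F : I -> T -> R) :
  (forall i, continuous (F i)) -> continuous (fun y => \sum_(i <- s) F i y).
Proof.
move=> cF; elim: s => [|i s IH].
  by under eq_fun do rewrite big_nil; exact: cst_continuous.
under eq_fun do rewrite big_cons.
by move=> x; apply: continuousD; [exact: cF | exact: IH].
Qed.

End lower_semicontinuous_minimum.

Section euclidean.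
Context {R : realType} {n : nat}.
Implicit Types (x y z : 'rV[R]_n) (f g : 'rV[R]_n -> \bar R).

Lemma continuous_coordB z i : continuous (fun y : 'rV[R]_n => (y - z) ord0 i).
Proof.
have -> : (fun y : 'rV[R]_n => (y - z) ord0 i) = (fun y => y ord0 i - z ord0 i).
  by apply/funext => y; rewrite !mxE.
by move=> y; exact: (cvgB (@coord_continuous R 1 n ord0 i y) (cvg_cst _)).
Qed.

Lemma continuous_sqnormB z : continuous (fun y : 'rV[R]_n => sqnorm (y - z)).
Proof.
apply: continuous_sum => i y.
exact: (cvgM (continuous_coordB z i y) (continuous_coordB z i y)).
Qed.

Lemma sqr_coord_le_sqnorm (u : 'rV[R]_n) i : u ord0 i ^+ 2 <= sqnorm u.
Proof.
rewrite /sqnorm /dotv (bigD1 i) //= expr2 lerDl.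
by apply: sumr_ge0 => j _; rewrite -expr2 sqr_ge0.
Qed.

Definition box z (s : R) : set 'rV[R]_n :=
  [set y | forall i, `[z ord0 i - s, z ord0 i + s]%classic (y ord0 i)].

Lemma box_compact z s : compact (box z s).
Proof.
exact: (rV_compact (fun i => @segment_compact R (z ord0 i - s) (z ord0 i + s))).
Qed.

Lemma sqnorm_gt_off_box z s y : 0 <= s -> ~ box z s y -> s ^+ 2 < sqnorm (y - z).
Proof.
move=> s_ge0 /existsNP[i]; rewrite /= in_itv /= => /negP.
rewrite negb_and -!ltNge => out.
apply: lt_le_trans (sqr_coord_le_sqnorm _ i); rewrite !mxE.
by case/orP: out => ?; nra.
Qed.

Lemma lsc_coercive_min g z (r c : R) y1 : lower_semicontinuous g -> 0 < c ->
  (forall y, ((r + c * sqnorm (y - z))%:E <= g y)%E) -> (g y1 < +oo)%E ->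
  exists p, forall y, (g p <= g y)%E.
Proof.
move=> lsc_g c_gt0 g_ge gy1_lt.
have [G gy1E] : exists G, g y1 = G%:E.
  by move: (g_ge y1) gy1_lt; case: (g y1) => [G| |] //; exists G.
pose D := (G - r) / c; pose s := `|D| + 1.
have s_ge1 : 1 <= s by rewrite lerDr.
have s_ge0 : 0 <= s := le_trans ler01 s_ge1.
have D_lt_s : D < s by apply: le_lt_trans (ler_norm D) _; rewrite ltrDl.
have far y : ~ box z s y -> (g y1 < g y)%E.
  move=> /(sqnorm_gt_off_box _ _ _ s_ge0) out.
  apply: lt_le_trans (g_ge y); rewrite gy1E lte_fin.
  have : D < sqnorm (y - z) by nra.
  by rewrite ltr_pdivrMr //; lra.
apply: (lsc_min_of_compact_core _ _ y1 (box_compact z s) lsc_g).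
  by apply: contrapT => /far; rewrite ltxx.
by move=> y /far /ltW.
Qed.

Lemma prox_minorant_recenter (lam : R) x y z : lam != 0 ->
  dotv (lam^-1 *: (z - x)) (y - x) - (2 * lam)^-1 * sqnorm (y - x) =
  (2 * lam)^-1 * sqnorm (x - z) - (2 * lam)^-1 * sqnorm (y - z).
Proof.
move=> lam_neq0; rewrite /sqnorm /dotv !mulr_sumr -!sumrB.
by apply: eq_bigr => i _; rewrite !mxE; field.
Qed.

Lemma prox_subgradP (lam : R) f x z : lam != 0 ->
  prox_subgrad lam f x (lam^-1 *: (z - x)) <->
  dom f x /\ forall y, (f x + ((2 * lam)^-1 * sqnorm (x - z))%:E <=
                         f y + ((2 * lam)^-1 * sqnorm (y - z))%:E)%E.
Proof.
move=> lam_neq0.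
have minorantE y : (f x + (dotv (lam^-1 *: (z - x)) (y - x) -
                           (2 * lam)^-1 * sqnorm (y - x))%:E <= f y)%E =
    (f x + ((2 * lam)^-1 * sqnorm (x - z))%:E <=
     f y + ((2 * lam)^-1 * sqnorm (y - z))%:E)%E.
  by rewrite prox_minorant_recenter // EFinB addeA leeBlDr.
by split=> -[dom_x x_min]; split=> // y; [rewrite -minorantE | rewrite minorantE].
Qed.

Lemma prox_subgrad_bounded_params (lam : R) f x v : proper_fun f -> 0 < lam ->
  prox_subgrad lam f x v -> prox_bounded_params f lam.
Proof.
move=> [f_gtNy _] lam_gt0; set z := x + lam *: v.
have -> : v = lam^-1 *: (z - x).
  by rewrite /z addrC addKr scalerA mulVf ?gt_eqF // scale1r.
move=> /(prox_subgradP _ _ _ _ (lt0r_neq0 lam_gt0))[dom_x x_min].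
split=> //; exists z; apply: lt_le_trans (le_ereal_inf_tmp _); last first.
  by move=> _ [y _ <-]; exact: x_min.
by move: (f_gtNy x) dom_x; rewrite /dom; case: (f x) => // r _ _; exact: ltNyr.
Qed.

Lemma dom_prox_subdiff_neq0 (lam : R) f :
  proper_fun f -> lower_semicontinuous f -> 0 < lam ->
  (lam%:E < prox_threshold f)%E -> dom_prox_subdiff lam f !=set0.
Proof.
move=> [f_gtNy [y1 fy1_lt]] lsc_f lam_gt0.
move=> /ereal_sup_gt[_ [mu [mu_gt0 [z inf_gtNy]] <-]]; rewrite lte_fin => lam_lt_mu.
have [r _ r_lt] := lte_EFin_between inf_gtNy.
set k := (2 * lam)^-1; set k' := (2 * mu)^-1.
have c_gt0 : 0 < k - k' by rewrite subr_gt0 ltf_pV2 ?posrE ?mulr_gt0 // ltr_pM2l.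
pose g y := (f y + (k * sqnorm (y - z))%:E)%E.
have lsc_g : lower_semicontinuous g.
  apply: lscD_continuous => // y.
  exact: (cvgM (cvg_cst k) (continuous_sqnormB z y)).
have g_ge y : ((r + (k - k') * sqnorm (y - z))%:E <= g y)%E.
  rewrite /g (_ : k * _ = k' * sqnorm (y - z) + (k - k') * sqnorm (y - z));
    last by ring.
  rewrite !EFinD addeA; apply: leeD2r; apply: le_trans (ltW r_lt) _.
  by apply: ereal_inf_lbound; exists y.
have gy1_lt : (g y1 < +oo)%E by apply: lte_add_pinfty; rewrite ?ltry.
have [p p_min] := lsc_coercive_min _ _ _ _ _ lsc_g c_gt0 g_ge gy1_lt.
exists p, (lam^-1 *: (z - p)); apply/prox_subgradP; first by rewrite gt_eqF.
split=> [|y]; last exact: p_min.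
move: (le_lt_trans (p_min y1) gy1_lt); rewrite /dom /g /=.
by case: (f p) => // fp _; exact: ltry.
Qed.

End euclidean.

Lemma ereal_sup_ge_pos_below (R : realType) (S : set R) (t : \bar R) :
  (0 < t)%E ->
  (forall r, 0 < r -> (r%:E < t)%E -> S r) ->
  (t <= ereal_sup [set r%:E | r in S])%E.
Proof.
move=> t_gt0 S_below; rewrite leNgt; apply/negP => sup_lt.
have : (Order.max (ereal_sup [set r%:E | r in S]) 0 < t)%E.
  by rewrite gt_max sup_lt.
move=> /lte_EFin_between[r].
rewrite gt_max lte_fin => /andP[sup_lt_r r_gt0] r_lt_t.
have : (r%:E <= ereal_sup [set r%:E | r in S])%E.
  by apply: ereal_sup_ubound; exists r => //; exact: S_below.
by rewrite leNgt sup_lt_r.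
Qed.

Theorem mainTheorem15 (R : realType) (n : nat) (f : 'rV[R]_n -> \bar R) :
  proper_fun f -> @lower_semicontinuous 'rV[R]_n R f -> prox_bounded f ->
  (0 < prox_threshold f)%E ->
  (forall lam : R, 0 < lam -> (lam%:E < prox_threshold f)%E ->
     dom_prox_subdiff lam f !=set0) /\
  prox_threshold f =
    ereal_sup [set lam%:E | lam in [set lam : R | 0 < lam /\ dom_prox_subdiff lam f !=set0]].
Proof.
(* prox_bounded f is implied by 0 < prox_threshold f. *)
move=> f_proper lsc_f _ threshold_gt0.
have dom_neq0 lam : 0 < lam -> (lam%:E < prox_threshold f)%E ->
    dom_prox_subdiff lam f !=set0.
  exact: dom_prox_subdiff_neq0.
split=> //; apply/eqP; rewrite eq_le; apply/andP; split.
  by apply: ereal_sup_ge_pos_below => // lam lam_gt0 /(dom_neq0 _ lam_gt0).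
apply: ereal_sup_le => _ [lam [lam_gt0 [x [v x_v]]] <-]; exists lam => //.
exact: prox_subgrad_bounded_params x_v.
Qed.
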